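(* Let $G$ be a group and $\preceq$ a left-ordering on $G$. Then $\preceq$ is Conradian if and only if the action of $G$ on the totally ordered set $(G,\preceq)$ by left translations admits no crossing.
   Context: A left-ordering on a group $G$ is a total order $\preceq$ with $f\prec g\Rightarrow hf\prec hg$ for all $f,g,h\in G$. It is Conradian if for all $f\succ id$ and $g\succ id$ there is $n\in\mathbb{N}$ with $fg^n\succ g$. If $G$ acts by order-preserving bijections on a totally ordered set $(\Omega,\le)$, a crossing for the action is a 5-tuple $(f,g,u,v,w)$ with $f,g\in G$ and $u,v,w\in\Omega$ such that: (i) $u<w<v$; (ii) for every $n\in\mathbb{N}$, $g^n u<v$ and $f^n v>u$; (iii) there exist $M,N\in\mathbb{N}$ with $f^N v<w<g^M u$. The left translation action is $g\cdot h=gh$. *)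

From Stdlib Require Import Arith.

Record Group := {
  carrier :> Type;
  gmul : carrier -> carrier -> carrier;
  gone : carrier;
  ginv : carrier -> carrier;
  gmul_assoc : forall a b c, gmul a (gmul b c) = gmul (gmul a b) c;
  gmul_one_l : forall a, gmul gone a = a;
  gmul_one_r : forall a, gmul a gone = a;
  gmul_inv_l : forall a, gmul (ginv a) a = gone;
  gmul_inv_r : forall a, gmul a (ginv a) = gone
}.

Fixpoint gpow (G : Group) (g : G) (n : nat) : G :=
  match n with
  | O => gone G
  | S k => gmul G g (gpow G g k)
  end.

Definition total_order {T : Type} (le : T -> T -> Prop) : Prop :=
  (forall x, le x x) /\
  (forall x y z, le x y -> le y z -> le x z) /\
  (forall x y, le x y -> le y x -> x = y) /\
  (forall x y, le x y \/ le y x).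

Definition strict {T : Type} (le : T -> T -> Prop) (x y : T) : Prop :=
  le x y /\ x <> y.

Definition left_ordering (G : Group) (le : G -> G -> Prop) : Prop :=
  total_order le /\
  (forall f g h, strict le f g -> strict le (gmul G h f) (gmul G h g)).

Definition conradian (G : Group) (le : G -> G -> Prop) : Prop :=
  forall f g, strict le (gone G) f -> strict le (gone G) g ->
    exists n : nat, strict le g (gmul G f (gpow G g n)).

Definition crossing (G : Group) {Omega : Type} (leO : Omega -> Omega -> Prop)
  (act : G -> Omega -> Omega) (f g : G) (u v w : Omega) : Prop :=
  strict leO u w /\ strict leO w v /\
  (forall n : nat, strict leO (act (gpow G g n) u) v /\
                   strict leO u (act (gpow G f n) v)) /\
  (exists M N : nat, strict leO (act (gpow G f N) v) w /\
                     strict leO w (act (gpow G g M) u)).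

Definition left_translation (G : Group) (g h : G) : G := gmul G g h.

(* If f, g > 1 but f g^n <= g for every n, then u = 1, v = f^-1 g, w = g^2 is a
   crossing for (f, g): the powers g^n stay below v, and f v = g < w < g^3.
   Conversely, a crossing (f, g, u, v, w) with f^N v < w < g^M u yields, after
   conjugating by u, the positive elements y = u^-1 g^M u and x = u^-1 f^N g^M u;
   since f^N g^(M k) u < f^N v < w < g^M u for every k, we get x y^n < y for
   all n, so the ordering is not Conradian. *)
From Stdlib Require Import Arith Classical.

Notation "x ⋅ y" := (gmul _ x y) (at level 40, left associativity).
Notation "x ⁻¹" := (ginv _ x) (at level 2, left associativity, format "x ⁻¹").
Notation "g ^+ n" := (gpow _ g n) (at level 30, right associativity).

Section GroupIdentities.

Variable G : Group.
Implicit Types a b c : G.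

Lemma mulKg a b : a⁻¹ ⋅ (a ⋅ b) = b.
Proof. now rewrite gmul_assoc, gmul_inv_l, gmul_one_l. Qed.

Lemma mulVKg a b : a ⋅ (a⁻¹ ⋅ b) = b.
Proof. now rewrite gmul_assoc, gmul_inv_r, gmul_one_l. Qed.

Lemma mulgK a b : a ⋅ b ⋅ b⁻¹ = a.
Proof. now rewrite <- gmul_assoc, gmul_inv_r, gmul_one_r. Qed.

Lemma gpow1 a : a ^+ 1 = a.
Proof. apply gmul_one_r. Qed.

Lemma gpowD a m n : a ^+ (m + n) = a ^+ m ⋅ a ^+ n.
Proof.
  induction m as [|m IH]; simpl.
  - now rewrite gmul_one_l.
  - now rewrite IH, gmul_assoc.
Qed.

Lemma gpowSr a n : a ^+ S n = a ^+ n ⋅ a.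
Proof. now rewrite <- Nat.add_1_r, gpowD, gpow1. Qed.

Lemma gpowM a m n : (a ^+ m) ^+ n = a ^+ (m * n).
Proof.
  induction n as [|n IH]; simpl.
  - now rewrite Nat.mul_0_r.
  - now rewrite IH, Nat.mul_succ_r, Nat.add_comm, gpowD.
Qed.

Lemma gpow_conj c a n : (c⁻¹ ⋅ (a ⋅ c)) ^+ n = c⁻¹ ⋅ (a ^+ n ⋅ c).
Proof.
  induction n as [|n IH]; simpl.
  - now rewrite gmul_one_l, gmul_inv_l.
  - now rewrite IH, !gmul_assoc, mulgK.
Qed.

End GroupIdentities.

Section LeftOrderedGroup.

Variables (G : Group) (le : G -> G -> Prop).
Hypothesis le_left : left_ordering G le.

Local Notation "x ≼ y" := (le x y) (at level 70).
Local Notation "x ≺ y" := (strict le x y) (at level 70).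
Implicit Types a u x y z : G.

Lemma le_refl x : x ≼ x.
Proof. apply le_left. Qed.

Lemma le_trans x y z : x ≼ y -> y ≼ z -> x ≼ z.
Proof. apply le_left. Qed.

Lemma le_antisym x y : x ≼ y -> y ≼ x -> x = y.
Proof. apply le_left. Qed.

Lemma lt_le x y : x ≺ y -> x ≼ y.
Proof. now intros []. Qed.

Lemma lt_trans x y z : x ≺ y -> y ≺ z -> x ≺ z.
Proof.
  intros [Hxy Nxy] [Hyz Nyz]; split.
  - exact (le_trans _ _ _ Hxy Hyz).
  - intros <-. exact (Nxy (le_antisym _ _ Hxy Hyz)).
Qed.

Lemma le_lt_trans x y z : x ≼ y -> y ≺ z -> x ≺ z.
Proof.
  intros Hxy Hyz. destruct (classic (x = y)) as [->|Nxy]; [exact Hyz|].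
  exact (lt_trans _ _ _ (conj Hxy Nxy) Hyz).
Qed.

Lemma lt_asym x y : x ≺ y -> ~ y ≺ x.
Proof. intros Hxy Hyx. exact (proj2 (lt_trans _ _ _ Hxy Hyx) eq_refl). Qed.

Lemma not_lt_le x y : ~ x ≺ y -> y ≼ x.
Proof.
  intro Nxy. destruct (proj2 (proj2 (proj2 (proj1 le_left))) x y) as [Hxy|Hyx];
    [|exact Hyx].
  destruct (classic (x = y)) as [->|Exy]; [apply le_refl|].
  now exfalso; apply Nxy.
Qed.

Lemma lt_mul2l a x y : x ≺ y -> a ⋅ x ≺ a ⋅ y.
Proof. apply le_left. Qed.

Lemma lt_mul2l_inv a x y : a ⋅ x ≺ a ⋅ y -> x ≺ y.
Proof. intro H. rewrite <- (mulKg G a x), <- (mulKg G a y). now apply lt_mul2l. Qed.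

Lemma le_mul2l a x y : x ≼ y -> a ⋅ x ≼ a ⋅ y.
Proof.
  intro Hxy. destruct (classic (x = y)) as [->|Nxy]; [apply le_refl|].
  now apply lt_le, lt_mul2l.
Qed.

Lemma lt_mulr a x : gone G ≺ a -> x ≺ x ⋅ a.
Proof. intro Ha. rewrite <- (gmul_one_r G x) at 1. now apply lt_mul2l. Qed.

Lemma one_le_gpow a n : gone G ≺ a -> gone G ≼ a ^+ n.
Proof.
  intro Ha. induction n as [|n IH]; simpl; [apply le_refl|].
  apply le_trans with a; [now apply lt_le|].
  rewrite <- (gmul_one_r G a) at 1. now apply le_mul2l.
Qed.

Lemma gpow_lt_succ a n : gone G ≺ a -> a ^+ n ≺ a ^+ S n.
Proof. intro Ha. rewrite gpowSr. now apply lt_mulr. Qed.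

Lemma lt_conj u a b : u⁻¹ ⋅ (a ⋅ u) ≺ u⁻¹ ⋅ (b ⋅ u) <-> a ⋅ u ≺ b ⋅ u.
Proof. split; [apply lt_mul2l_inv | apply lt_mul2l]. Qed.

Lemma one_lt_conj u a : gone G ≺ u⁻¹ ⋅ (a ⋅ u) <-> u ≺ a ⋅ u.
Proof.
  split; intro H.
  - apply (lt_mul2l u) in H. now rewrite mulVKg, gmul_one_r in H.
  - apply (lt_mul2l_inv u). now rewrite mulVKg, gmul_one_r.
Qed.

Lemma crossing_not_conradian f g u v w :
  crossing G le (left_translation G) f g u v w -> ~ conradian G le.
Proof.
  unfold crossing, left_translation.
  intros [Huw [Hwv [Hpow [M [N [HfN HgM]]]]]] Hcon.
  set (F := f ^+ N); set (Gm := g ^+ M).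
  assert (HFGm : F ⋅ v ≺ Gm ⋅ u) by exact (lt_trans _ _ _ HfN HgM).
  assert (Hy : gone G ≺ u⁻¹ ⋅ (Gm ⋅ u)).
  { apply one_lt_conj. exact (lt_trans _ _ _ Huw HgM). }
  assert (Hx : gone G ≺ u⁻¹ ⋅ (F ⋅ Gm ⋅ u)).
  { apply one_lt_conj. rewrite <- gmul_assoc.
    apply lt_trans with (F ⋅ (F ⋅ v)); [|now apply lt_mul2l].
    rewrite gmul_assoc. unfold F. rewrite <- gpowD.
    apply (proj2 (Hpow (N + N))). }
  destruct (Hcon _ _ Hx Hy) as [n Hn].
  assert (Hprod : u⁻¹ ⋅ (F ⋅ Gm ⋅ u) ⋅ (u⁻¹ ⋅ (Gm ^+ n ⋅ u))
                 = u⁻¹ ⋅ (F ⋅ Gm ^+ S n ⋅ u)).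
  { simpl. now rewrite !gmul_assoc, mulgK. }
  rewrite gpow_conj, Hprod, lt_conj in Hn.
  unfold Gm in Hn. rewrite gpowM in Hn.
  apply (lt_asym _ _ Hn).
  apply lt_trans with (F ⋅ v); [|exact HFGm].
  rewrite <- gmul_assoc. apply lt_mul2l, (proj1 (Hpow (M * S n))).
Qed.

Lemma not_conradian_bounded_powers :
  ~ conradian G le ->
  exists f g, gone G ≺ f /\ gone G ≺ g /\ forall n, f ⋅ g ^+ n ≺ g.
Proof.
  intro Ncon. apply NNPP. intro Nex. apply Ncon. intros f g Hf Hg.
  apply NNPP. intro Nn. apply Nex. exists f, g. do 2 (split; [assumption|]).
  intro n. split.
  - apply not_lt_le. intro Hlt. apply Nn. now exists n.
  - intro Heq. apply Nn. exists (S n). rewrite <- Heq at 1.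
    now apply lt_mul2l, gpow_lt_succ.
Qed.

Lemma bounded_powers_crossing f g :
  gone G ≺ f -> gone G ≺ g -> (forall n, f ⋅ g ^+ n ≺ g) ->
  crossing G le (left_translation G) f g (gone G) (f⁻¹ ⋅ g) (g ^+ 2).
Proof.
  intros Hf Hg Hbound.
  assert (Hv : forall n, g ^+ n ≺ f⁻¹ ⋅ g).
  { intro n. apply (lt_mul2l_inv f). rewrite mulVKg. apply Hbound. }
  assert (Hg2 : g ≺ g ^+ 2) by (rewrite <- (gpow1 G g) at 1; now apply gpow_lt_succ).
  assert (Hfv : forall n, gone G ≺ f ^+ n ⋅ (f⁻¹ ⋅ g)).
  { intro n. apply le_lt_trans with (f ^+ n); [now apply one_le_gpow|].
    apply lt_mulr, (lt_mul2l_inv f). rewrite mulVKg, gmul_one_r.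
    rewrite <- (gmul_one_r G f). exact (Hbound 0). }
  unfold crossing, left_translation. split; [|split; [|split]].
  - exact (lt_trans _ _ _ Hg Hg2).
  - exact (Hv 2).
  - intro n. rewrite gmul_one_r. exact (conj (Hv n) (Hfv n)).
  - exists 3, 1. rewrite gpow1, mulVKg, gmul_one_r. split; [exact Hg2|].
    now apply gpow_lt_succ.
Qed.

End LeftOrderedGroup.

Theorem theoremA (G : Group) (le : G -> G -> Prop) :
  left_ordering G le ->
  (conradian G le <->
   ~ exists (f g u v w : G), crossing G le (left_translation G) f g u v w).
Proof.
  intro Hle. split.
  - intros Hcon [f [g [u [v [w Hcr]]]]].
    exact (crossing_not_conradian G le Hle f g u v w Hcr Hcon).
  - intro Ncross. apply NNPP. intro Ncon.
    destruct (not_conradian_bounded_powers G le Hle Ncon) as [f [g [Hf [Hg Hb]]]].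
    apply Ncross. exists f, g, (gone G), (f⁻¹ ⋅ g), (g ^+ 2).
    now apply bounded_powers_crossing.
Qed.
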